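(* Let $p$ be an odd prime, $v$ an integer with $1<v<p-1$, $g\in\{2,\dots,p-1\}$ a primitive root modulo $p$, and $t\ge1$. For $z\in\{0,\dots,v-1\}^t$ let $\lambda(z)=\#\{x\in\{0,\dots,p-2\}:\ (g^{x+\iota}\,\%\,p)\,\%\,v=z(\iota)\ \forall\,0\le\iota<t\}$. If $p\ge v\,g^{t-1}$ and $g\ge v$, then $\lambda(z)>0$ for all $z\in\{0,\dots,v-1\}^t$.
   Context: $x\,\%\,m$ denotes the least nonnegative remainder of the integer $x$ modulo $m$. *)

From mathcomp Require Import all_boot.
Set Implicit Arguments. Unset Strict Implicit. Unset Printing Implicit Defensive.

Definition primitive_root_mod (p g : nat) : Prop :=
  coprime g p /\ forall k, 0 < k < p.-1 -> g ^ k %% p != 1.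

Arguments primitive_root_mod : clear implicits.
Definition lambda (p v g t : nat) (z : 'I_t -> 'I_v) : nat :=
  #|[set x : 'I_p.-1 | [forall i : 'I_t, (g ^ (x + i) %% p) %% v == z i]]|.
Arguments lambda : clear implicits.

From mathcomp Require Import all_boot zify.

Set Implicit Arguments.
Unset Strict Implicit.
Unset Printing Implicit Defensive.

(* Write g^n y = p D_n + r_n with r_n = g^n y mod p.  Then
   D_(n+1) = g D_n + (g r_n div p) with g r_n div p < g, and r_i = g^i y - p D_i
   mod v, so the residues r_0 mod v, ..., r_n mod v are fixed by y mod v and D_n.
   By induction on n, D_n < g^n can be chosen digit by digit so that they equal
   z(0), ..., z(n): the new digit d < v <= g only has to solve p d = c mod v,
   which is possible as p is coprime to v.  The y with g^(t-1) y div p = D_(t-1)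
   fill an interval of length p / g^(t-1) > v inside (0, p), so one of them is
   congruent to z(0) mod v; it is g^x mod p for some x, which lambda(z) counts. *)

Lemma add_pred_mul_mod (v a c : nat) : 0 < v -> a + (c + v.-1 * a) = c %[mod v].
Proof. by move=> v_gt0; rewrite addnCA -mulSn prednK // addnC mulnC modnMDl. Qed.

Lemma coprime_lin_congr (p v a c : nat) : 0 < v -> coprime p v ->
  exists2 d, d < v & a + p * d = c %[mod v].
Proof.
move=> v_gt0 co_pv.
set x := chinese p v 0 (c + v.-1 * a).
have /dvdnP [k x_eq] : p %| x by rewrite /dvdn chinese_modl // mod0n.
exists (k %% v); first by rewrite ltn_mod.
rewrite -modnDmr modnMmr modnDmr mulnC -x_eq -modnDmr chinese_modr // modnDmr.
exact: add_pred_mul_mod.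
Qed.

Section PrimitiveRoot.

Variables p g : nat.
Hypotheses (p_pr : prime p) (g_prim : primitive_root_mod p g).

Lemma primitive_root_gt0 : 0 < g.
Proof.
by case: g g_prim => // -[]; rewrite coprime_sym prime_coprime // dvdn0.
Qed.

Lemma coprime_primitive_root_expn x : coprime p (g ^ x).
Proof. by rewrite coprime_sym coprimeXl // g_prim.1. Qed.

Lemma primitive_root_expn_inj a b :
  a < p.-1 -> b < p.-1 -> g ^ a = g ^ b %[mod p] -> a = b.
Proof.
wlog le_ab : a b / a <= b.
  by move=> IH a_lt b_lt eq_ab; case: (leqP a b) => [|/ltnW] le;
    [exact: IH | symmetry; apply: IH].
move=> _ b_lt eq_ab; apply/eqP; rewrite eqn_leq le_ab /=; apply/negP => lt_ab.
have : g ^ (b - a) = 1 %[mod p].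
  apply/eqP; rewrite eqn_mod_dvd ?expn_gt0 ?primitive_root_gt0 //.
  rewrite -(Gauss_dvdr _ (coprime_primitive_root_expn a)).
  rewrite mulnBr muln1 -expnD subnKC // -eqn_mod_dvd ?leq_pexp2l ?primitive_root_gt0 //.
  by rewrite eq_ab.
rewrite (modn_small (prime_gt1 p_pr)) => /eqP.
by apply/negP/g_prim.2; lia.
Qed.

Lemma primitive_root_dlog y :
  0 < y < p -> exists2 x, x < p.-1 & g ^ x %% p = y.
Proof.
move=> /andP[y_gt0 y_lt].
have expn_mod_gt0 x : 0 < g ^ x %% p.
  by rewrite lt0n -/(dvdn p _) -prime_coprime ?coprime_primitive_root_expn.
have f_lt (x : 'I_p.-1) : (g ^ x %% p).-1 < p.-1.
  by have := ltn_pmod (g ^ x) (prime_gt0 p_pr); have := expn_mod_gt0 x; lia.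
pose f x := Ordinal (f_lt x).
have f_inj : injective f.
  move=> a b /(congr1 val) /= eq_ab.
  apply: val_inj; apply: (primitive_root_expn_inj (ltn_ord a) (ltn_ord b)) => /=.
  by rewrite -(prednK (expn_mod_gt0 a)) -(prednK (expn_mod_gt0 b)) eq_ab.
have y_pred_lt : y.-1 < p.-1 by lia.
have /codomP [x /(congr1 val) /= fx] :=
  inj_card_onto f_inj (leqnn _) (Ordinal y_pred_lt).
exists x => //.
by rewrite -(prednK (expn_mod_gt0 x)) -(prednK y_gt0) fx.
Qed.

End PrimitiveRoot.

Lemma residue_in_div_window (p v G D c : nat) :
  0 < v -> G * v < p -> D < G ->
  exists y, [/\ 0 < y < p, G * y %/ p = D & y = c %[mod v]].
Proof.
move=> v_gt0 Gv_lt D_lt.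
have G_gt0 : 0 < G by apply: leq_ltn_trans D_lt.
set k := p * D %/ G.
set y := k.+1 + (c + v.-1 * k.+1) %% v.
have y_lo : p * D < G * y.
  by apply: leq_trans (ltn_ceil _ G_gt0) _; rewrite mulnC leq_mul2l leq_addr orbT.
have y_hi : G * y < p * D.+1.
  have : y <= k + v by have := ltn_pmod (c + v.-1 * k.+1) v_gt0; rewrite /y; lia.
  have := leq_divM (p * D) G.
  rewrite mulnS; nia.
have p_gt0 : 0 < p by apply: leq_ltn_trans Gv_lt.
exists y; split.
- apply/andP; split; first by rewrite /y addSn.
  rewrite -(ltn_pmul2l G_gt0); apply: leq_trans y_hi _.
  by rewrite mulnC leq_mul2r D_lt orbT.
- apply/eqP; rewrite eqn_leq -ltnS ltn_divLR // leq_divRL //.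
  by rewrite !(mulnC _ p) y_hi ltnW.
- by rewrite /y modnDmr add_pred_mul_mod.
Qed.

Section PrescribedResidues.

Variables (p v g : nat) (z : nat -> nat).
Hypotheses (v_gt0 : 0 < v) (v_le_g : v <= g) (co_pv : coprime p v).

Lemma prescribed_residues_block n : exists2 D, D < g ^ n &
  forall y, y = z 0 %[mod v] -> g ^ n * y %/ p = D ->
  forall i, i <= n -> g ^ i * y %% p = z i %[mod v].
Proof.
have g_gt0 : 0 < g by apply: leq_trans v_le_g.
elim: n => [|n [D D_lt blockD]].
  exists 0 => // y y_z y_div i; rewrite leqn0 => /eqP -> /=.
  rewrite expn0 mul1n in y_div *.
  by rewrite -y_z {2}(divn_eq y p) y_div mul0n add0n.
have [d d_lt d_congr] :=
  coprime_lin_congr (z n.+1 + p * (D * g)) (g ^ n.+1 * z 0) v_gt0 co_pv.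
exists (D * g + d) => [|y y_z y_div i].
  rewrite expnSr; apply: leq_trans (_ : D.+1 * g <= _); first lia.
  by rewrite leq_mul2r D_lt orbT.
rewrite leq_eqVlt ltnS => /orP[/eqP-> | le_in].
  have split_p : g ^ n.+1 * y %% p + p * (D * g + d) = g ^ n.+1 * y.
    by rewrite -y_div addnC mulnC -divn_eq.
  apply/eqP; rewrite -(eqn_modDr (p * (D * g + d))) split_p mulnDr addnA.
  by rewrite d_congr -modnMmr y_z modnMmr.
apply: blockD => //.
rewrite -[LHS](divnMr g_gt0) mulnAC -expnSr divnMA y_div.
by rewrite divnMDl // divn_small ?addn0 // (leq_trans d_lt v_le_g).
Qed.

End PrescribedResidues.

Theorem corollary5 (p v g t : nat) :
  prime p -> odd p -> 1 < v < p.-1 -> 2 <= g <= p.-1 ->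
  primitive_root_mod p g -> 1 <= t ->
  v * g ^ t.-1 <= p -> v <= g ->
  forall z : 'I_t -> 'I_v, 0 < lambda p v g t z.
Proof.
move=> p_pr _ /andP[v_gt1 v_lt] _ g_prim _ vG_le v_le_g z.
have v_gt0 : 0 < v by apply: ltnW.
have co_pv : coprime p v.
  by rewrite prime_coprime //; apply: contraTN v_lt => /dvdn_leq; lia.
have Gv_lt : g ^ t.-1 * v < p.
  rewrite ltn_neqAle mulnC vG_le andbT; apply: contraTneq co_pv => <-.
  by rewrite /coprime gcdnC gcdnMr gtn_eqF.
pose zn i := odflt 0 (omap (fun j : 'I_t => val (z j)) (insub i)).
have [D D_lt blockD] := prescribed_residues_block zn v_gt0 v_le_g co_pv t.-1.
have [y [y_range y_div y_z]] := residue_in_div_window (zn 0) v_gt0 Gv_lt D_lt.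
have [x x_lt gx] := primitive_root_dlog p_pr g_prim y_range.
rewrite card_gt0; apply/set0Pn; exists (Ordinal x_lt); rewrite inE.
apply/forallP => i /=; rewrite expnD -modnMml gx mulnC.
have i_le : i <= t.-1 by rewrite -ltnS (ltn_predK (ltn_ord i)).
by rewrite (blockD y y_z y_div i i_le) /zn valK /= (modn_small (ltn_ord (z i))).
Qed.
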